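(* Let $\theta>0$, $h>0$ and $\mu=\frac12(\delta_{-1}+\delta_{+1})$. For $r\ge0$ and $\Psi\in[0,2\pi)$ let \[ q_{r,\Psi}(x,\eta)=[Z_{r,\Psi}(\eta)]^{-1}\exp\{2\theta r\cos(\Psi-x)+2h\eta\cos x\},\qquad Z_{r,\Psi}(\eta)=\int_0^{2\pi}\exp\{2\theta r\cos(\Psi-x)+2h\eta\cos x\}\,dx, \] and consider the self-consistency relation \[ r e^{i\Psi}=\int_{\{-1,+1\}}\int_0^{2\pi}e^{ix}\,q_{r,\Psi}(x,\eta)\,dx\,\mu(d\eta). \] This relation admits solutions $(r_+,\Psi_+)$ with $r_+>0$ if and only if $\Psi_+\in\{0,\frac{\pi}{2},\pi,\frac{3\pi}{2}\}$. Moreover, $r=r_+$ has to satisfy \[ r=\begin{cases}\dfrac12\left[\dfrac{I_1(2(h+\theta r))}{I_0(2(h+\theta r))}-\dfrac{I_1(2(h-\theta r))}{I_0(2(h-\theta r))}\right] & \text{if } \Psi_+\in\{0,\pi\},\\[3mm] \dfrac{\theta r}{\sqrt{h^2+\theta^2r^2}}\,\dfrac{I_1\big(2\sqrt{h^2+\theta^2r^2}\big)}{I_0\big(2\sqrt{h^2+\theta^2r^2}\big)} & \text{if } \Psi_+\in\{\frac{\pi}{2},\frac{3\pi}{2}\},\end{cases} \] where $I_v(y)=\frac{1}{2\pi}\int_0^{2\pi}\cos(v\alpha)\exp\{y\cos\alpha\}\,d\alpha$ denotes the modified Bessel function of the first kind of order $v$.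
   Context: $\theta>0$ is the coupling strength, $h>0$ the field intensity, $\mu$ the uniform law on $\{-1,+1\}$ of the random field. Solutions $(r,\Psi)$ with $r>0$ are called ferromagnetic. *)

From Stdlib Require Import Reals.
From Coquelicot Require Import Coquelicot.
Open Scope R_scope.

Definition cis (x : R) : C := (cos x, sin x).

Definition weight (theta h r Psi x eta : R) : R :=
  exp (2 * theta * r * cos (Psi - x) + 2 * h * eta * cos x).

Definition Zpart (theta h r Psi eta : R) : R :=
  RInt (fun x => weight theta h r Psi x eta) 0 (2 * PI).

Definition q (theta h r Psi x eta : R) : R :=
  / Zpart theta h r Psi eta * weight theta h r Psi x eta.

Definition mu_integral (F : R -> C) : C :=
  ((/2 : C) * (F (-1) + F 1))%C.

Definition self_consistent (theta h r Psi : R) : Prop :=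
  (r * cis Psi)%C =
  mu_integral (fun eta =>
    @RInt C_R_CompleteNormedModule
      (fun x => (RtoC (q theta h r Psi x eta) * cis x)%C) 0 (2 * PI)).

Definition BesselI (v y : R) : R :=
  / (2 * PI) * RInt (fun a => cos (v * a) * exp (y * cos a)) 0 (2 * PI).

From Stdlib Require Import Reals Lra.
From Coquelicot Require Import Coquelicot.
Open Scope R_scope.

(* The weight [exp (2 theta r cos (Psi - x) + 2 h eta cos x)] is the von Mises weight
   [exp (A cos x + B sin x)] with [A = 2 theta r cos Psi + 2 h eta] and
   [B = 2 theta r sin Psi].  Rotating by the polar angle of [(A, B)] shows that its mean of
   [e^{ix}] is [(A + i B) G(rho)], where [rho = sqrt (A^2 + B^2)] and
   [G(rho) = I1(rho) / (rho I0(rho))].  If [sin Psi <> 0], the imaginary part of the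
   self-consistency relation gives [theta (G(rho_-) + G(rho_+)) = 1], and then the real part
   reduces to [h (G(rho_+) - G(rho_-)) = 0].  Integration by parts turns [G] into
   [1 - C2 / C0], where [Ck(p)] integrates [cos^k y exp (p cos y)] over a period, and
   [C2 / C0] is strictly increasing on [[0, oo)] because the cross difference
   [C2(q) C0(p) - C2(p) C0(q)] is the integral of a nonnegative symmetrised kernel.  Hence
   [G] is injective, [rho_+ = rho_-], and so [cos Psi = 0].  On the two axes the relation
   reduces directly to the stated scalar equations. *)

(* Goals produced by Coquelicot's integral lemmas are equalities in the carrier of a normed
   module, which [ring] and [field] do not recognise as equalities in [R]. *)
Ltac R_eq := match goal with |- ?a = ?b => change (a = b :> R) end.

Ltac solve_continuous :=
  intros; apply (@ex_derive_continuous R_AbsRing R_NormedModule); auto_derive; auto.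

(** * Riemann integrals of continuous functions *)

Section Integration.

Variable f : R -> R.
Hypothesis f_cont : forall x, continuous f x.

Lemma ex_RInt_cont a b : ex_RInt f a b.
Proof. apply (@ex_RInt_continuous R_CompleteNormedModule); auto. Qed.

Lemma RInt_Chasles_cont a b c : RInt f a b + RInt f b c = RInt f a c.
Proof. apply (@RInt_Chasles R_CompleteNormedModule); apply ex_RInt_cont. Qed.

Lemma RInt_swap_cont a b : RInt f b a = - RInt f a b.
Proof. rewrite <- (@opp_RInt_swap R_CompleteNormedModule); [reflexivity | apply ex_RInt_cont]. Qed.

Lemma RInt_scal_cont k a b : RInt (fun x => k * f x) a b = k * RInt f a b.
Proof. apply (@RInt_scal R_CompleteNormedModule); apply ex_RInt_cont. Qed.

Lemma RInt_shift a b c : RInt (fun x => f (x + c)) a b = RInt f (a + c) (b + c).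
Proof.
  rewrite <- (Rmult_1_l a) at 2; rewrite <- (Rmult_1_l b) at 2.
  rewrite <- (@RInt_comp_lin R_CompleteNormedModule f 1 c a b) by apply ex_RInt_cont.
  apply RInt_ext; intros x _; unfold scal; simpl; unfold mult; simpl.
  rewrite !Rmult_1_l; reflexivity.
Qed.

Lemma RInt_periodic_shift T c : (forall x, f (x + T) = f x) ->
  RInt (fun x => f (x + c)) 0 T = RInt f 0 T.
Proof.
  intros f_per. rewrite RInt_shift, Rplus_0_l.
  rewrite <- (RInt_Chasles_cont c 0 (T + c)), <- (RInt_Chasles_cont 0 T (T + c)).
  replace (RInt f T (T + c)) with (RInt f 0 c).
  - rewrite (RInt_swap_cont 0 c); lra.
  - transitivity (RInt (fun x => f (x + T)) 0 c).
    + apply RInt_ext; intros x _; symmetry; apply f_per.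
    + rewrite RInt_shift; f_equal; ring.
Qed.

Lemma RInt_gt_0_at a b c : a < c < b -> (forall x, a < x < b -> 0 <= f x) -> 0 < f c ->
  0 < RInt f a b.
Proof.
  intros Hc f_ge0 fc_gt0.
  destruct (f_cont c _ (open_gt 0 _ fc_gt0)) as [eps Heps].
  set (e := Rmin eps (Rmin (c - a) (b - c)) / 2).
  assert (He : 0 < e /\ e < eps /\ e < c - a /\ e < b - c).
  { assert (0 < Rmin eps (Rmin (c - a) (b - c)))
      by (apply Rmin_pos; [apply cond_pos | apply Rmin_pos; lra]).
    pose proof (Rmin_l eps (Rmin (c - a) (b - c))).
    pose proof (Rmin_r eps (Rmin (c - a) (b - c))).
    pose proof (Rmin_l (c - a) (b - c)). pose proof (Rmin_r (c - a) (b - c)).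
    unfold e; lra. }
  rewrite <- (RInt_Chasles_cont a (c - e) b), <- (RInt_Chasles_cont (c - e) (c + e) b).
  assert (0 <= RInt f a (c - e))
    by (apply RInt_ge_0; [lra | apply ex_RInt_cont | intros; apply f_ge0; lra]).
  assert (0 <= RInt f (c + e) b)
    by (apply RInt_ge_0; [lra | apply ex_RInt_cont | intros; apply f_ge0; lra]).
  assert (0 < RInt f (c - e) (c + e)).
  { apply RInt_gt_0; [lra | | auto].
    intros x Hx; apply Heps.
    change (Rabs (x - c) < eps); apply Rabs_def1; lra. }
  lra.
Qed.

End Integration.

Section IntegrationLinear.

Variables f g : R -> R.
Hypothesis f_cont : forall x, continuous f x.
Hypothesis g_cont : forall x, continuous g x.

Lemma RInt_plus_cont a b : RInt (fun x => f x + g x) a b = RInt f a b + RInt g a b.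
Proof. apply (@RInt_plus R_CompleteNormedModule); apply ex_RInt_cont; auto. Qed.

Lemma RInt_minus_cont a b : RInt (fun x => f x - g x) a b = RInt f a b - RInt g a b.
Proof. apply (@RInt_minus R_CompleteNormedModule); apply ex_RInt_cont; auto. Qed.

End IntegrationLinear.

Lemma RInt_derive_eq0 (F f : R -> R) a b : (forall x, is_derive F x (f x)) ->
  (forall x, continuous f x) -> F b = F a -> RInt f a b = 0.
Proof.
  intros F_der f_cont F_ends.
  rewrite (is_RInt_unique f a b (minus (F b) (F a))).
  - rewrite F_ends; unfold minus, plus, opp; simpl; ring.
  - apply (@is_RInt_derive R_CompleteNormedModule); auto.
Qed.

Lemma RInt_sin_comp_cos (h : R -> R) : (forall c, continuous h c) ->
  RInt (fun y => sin y * h (cos y)) 0 (2 * PI) = 0.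
Proof.
  intros h_cont.
  (* substitute u = - cos y, which takes the same value -1 at both ends *)
  pose proof (RInt_comp (fun u => h (- u)) (fun y => - cos y) sin 0 (2 * PI)) as Hsub.
  simpl in Hsub; rewrite cos_0, cos_2PI, RInt_point in Hsub.
  etransitivity; [| apply Hsub].
  - apply RInt_ext; intros y _; unfold scal; simpl; unfold mult; simpl.
    rewrite Ropp_involutive; reflexivity.
  - intros y _; apply (continuous_comp (fun u => - u) h); [solve_continuous | apply h_cont].
  - intros y _; split; [auto_derive; auto; ring | apply continuous_sin].
Qed.

Lemma RInt_pair (f : R -> C) (u v : R -> R) a b :
  (forall x, continuous u x) -> (forall x, continuous v x) ->
  (forall x, f x = (u x, v x)) ->
  @RInt C_R_CompleteNormedModule f a b = (RInt u a b, RInt v a b).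
Proof.
  intros u_cont v_cont Hf. apply is_RInt_unique.
  apply (@is_RInt_fct_extend_pair R_NormedModule R_NormedModule);
    [apply (is_RInt_ext u) | apply (is_RInt_ext v)];
    try (intros; rewrite Hf; reflexivity);
    apply (@RInt_correct R_CompleteNormedModule), ex_RInt_cont; auto.
Qed.

(** * Moments of [exp (p cos y)] *)

Lemma cos_add_2PI x : cos (x + 2 * PI) = cos x.
Proof. rewrite <- (cos_period x 1); f_equal; simpl; ring. Qed.

Lemma sin_add_2PI x : sin (x + 2 * PI) = sin x.
Proof. rewrite <- (sin_period x 1); f_equal; simpl; ring. Qed.

Definition cos_moment (k : nat) (p : R) : R :=
  RInt (fun y => cos y ^ k * exp (p * cos y)) 0 (2 * PI).

Definition bessel_ratio (p : R) : R := cos_moment 1 p / cos_moment 0 p.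

Lemma cos_moment0_gt0 p : 0 < cos_moment 0 p.
Proof.
  apply RInt_gt_0; [pose proof PI_RGT_0; lra | | solve_continuous].
  intros; rewrite pow_O, Rmult_1_l; apply exp_pos.
Qed.

Lemma cos_moment_opp k p : cos_moment k (- p) = (-1) ^ k * cos_moment k p.
Proof.
  unfold cos_moment. rewrite <- RInt_scal_cont by solve_continuous.
  rewrite <- (RInt_periodic_shift (fun y => (-1) ^ k * (cos y ^ k * exp (p * cos y))))
    with (c := PI); [| solve_continuous |].
  - apply RInt_ext; intros y _.
    rewrite neg_cos.
    replace ((- cos y) ^ k) with ((-1) ^ k * cos y ^ k)
      by (rewrite <- Rpow_mult_distr; f_equal; ring).
    replace (p * - cos y) with (- p * cos y) by ring.
    rewrite <- !Rmult_assoc, <- Rpow_mult_distr.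
    replace (-1 * -1) with 1 by ring; rewrite pow1, Rmult_1_l; reflexivity.
  - intros y; rewrite cos_add_2PI; reflexivity.
Qed.

Lemma bessel_ratio_opp p : bessel_ratio (- p) = - bessel_ratio p.
Proof.
  unfold bessel_ratio; rewrite !cos_moment_opp.
  pose proof (cos_moment0_gt0 p); simpl; field; lra.
Qed.

Lemma BesselI_ratio y : BesselI 1 y / BesselI 0 y = bessel_ratio y.
Proof.
  unfold BesselI, bessel_ratio, cos_moment.
  rewrite (RInt_ext (fun a => cos (1 * a) * exp (y * cos a)) (fun a => cos a ^ 1 * exp (y * cos a)))
    by (intros; rewrite Rmult_1_l, pow_1; reflexivity).
  rewrite (RInt_ext (fun a => cos (0 * a) * exp (y * cos a)) (fun a => cos a ^ 0 * exp (y * cos a)))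
    by (intros; rewrite Rmult_0_l, cos_0; reflexivity).
  pose proof (cos_moment0_gt0 y); pose proof PI_RGT_0.
  unfold cos_moment in *; field; lra.
Qed.

Lemma cos_moment1_by_parts p : cos_moment 1 p = p * (cos_moment 0 p - cos_moment 2 p).
Proof.
  assert (H : RInt (fun y => cos y ^ 1 * exp (p * cos y)
      - p * (cos y ^ 0 * exp (p * cos y) - cos y ^ 2 * exp (p * cos y))) 0 (2 * PI) = 0).
  { apply (RInt_derive_eq0 (fun y => sin y * exp (p * cos y))).
    - intros y; auto_derive; auto.
      pose proof (sin2 y) as Hsin; unfold Rsqr in Hsin.
      replace (sin y * (p * (1 * - sin y) * exp (p * cos y)))
        with (- (p * exp (p * cos y)) * (sin y * sin y)) by ring.
      rewrite Hsin; ring.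
    - solve_continuous.
    - rewrite sin_2PI, sin_0; ring. }
  rewrite RInt_minus_cont, RInt_scal_cont, RInt_minus_cont in H by solve_continuous.
  unfold cos_moment; lra.
Qed.

(** * Monotonicity of [I1(p) / (p I0(p))] *)

Lemma cosh_lt_nonneg a b : 0 <= a < b -> cosh a < cosh b.
Proof.
  intros Hab; unfold cosh.
  assert (exp a < exp b) by (apply exp_increasing; lra).
  assert (exp (- a - b) < 1) by (rewrite <- exp_0; apply exp_increasing; lra).
  assert (exp b * exp (- a - b) = exp (- a)) by (rewrite <- exp_plus; f_equal; ring).
  assert (exp a * exp (- a - b) = exp (- b)) by (rewrite <- exp_plus; f_equal; ring).
  nra.
Qed.

Lemma cosh_abs t : cosh (Rabs t) = cosh t.
Proof.
  unfold cosh; destruct (Rle_dec 0 t).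
  - rewrite Rabs_right; lra.
  - rewrite Rabs_left, Ropp_involutive by lra; lra.
Qed.

Lemma cosh_lt_sqr s t : s ^ 2 < t ^ 2 -> cosh s < cosh t.
Proof.
  intros Hst; rewrite <- cosh_abs, <- (cosh_abs t).
  apply cosh_lt_nonneg; split; [apply Rabs_pos |].
  apply Rsqr_lt_abs_0; unfold Rsqr; lra.
Qed.

Lemma cosh_sqr_monotone s t : 0 <= (t ^ 2 - s ^ 2) * (cosh t - cosh s).
Proof.
  destruct (Rtotal_order (s ^ 2) (t ^ 2)) as [Hlt | [Heq | Hgt]].
  - pose proof (cosh_lt_sqr s t Hlt); nra.
  - rewrite Heq; lra.
  - pose proof (cosh_lt_sqr t s Hgt); nra.
Qed.

Lemma cosh_sqr_monotone_strict s t : s ^ 2 <> t ^ 2 -> 0 < (t ^ 2 - s ^ 2) * (cosh t - cosh s).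
Proof.
  intros Hst; destruct (Rtotal_order (s ^ 2) (t ^ 2)) as [Hlt | [Heq | Hgt]].
  - pose proof (cosh_lt_sqr s t Hlt); nra.
  - contradiction.
  - pose proof (cosh_lt_sqr t s Hgt); nra.
Qed.

Lemma RInt_cos_pow_cosh k a b : Nat.Even k ->
  RInt (fun y => cos y ^ k * cosh (a + b * cos y)) 0 (2 * PI) = cosh a * cos_moment k b.
Proof.
  intros [m ->].
  rewrite (RInt_ext _ (fun y => exp a / 2 * (cos y ^ (2 * m) * exp (b * cos y))
                               + exp (- a) / 2 * (cos y ^ (2 * m) * exp (- b * cos y)))).
  - rewrite RInt_plus_cont, !RInt_scal_cont by solve_continuous.
    fold (cos_moment (2 * m) b) (cos_moment (2 * m) (- b)).
    rewrite cos_moment_opp, pow_1_even; unfold cosh; R_eq; field.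
  - intros y _; unfold cosh.
    rewrite Ropp_plus_distr, !exp_plus, <- Ropp_mult_distr_l; R_eq; field.
Qed.

Lemma RInt_sqr_sub_cosh a b u :
  RInt (fun y => (cos y ^ 2 - u ^ 2) * cosh (a + b * cos y)) 0 (2 * PI)
  = cosh a * (cos_moment 2 b - u ^ 2 * cos_moment 0 b).
Proof.
  rewrite (RInt_ext _ (fun y => cos y ^ 2 * cosh (a + b * cos y)
                               - u ^ 2 * (cos y ^ 0 * cosh (a + b * cos y))))
    by (intros; R_eq; ring).
  rewrite RInt_minus_cont, RInt_scal_cont by (unfold cosh; solve_continuous).
  rewrite !RInt_cos_pow_cosh by (apply Nat.even_spec; reflexivity).
  R_eq; ring.
Qed.

Definition cosh_weight (p q u : R) : R :=
  cosh (p * u) * (cos_moment 2 q - u ^ 2 * cos_moment 0 q).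

Lemma RInt_cosh_weight p q :
  RInt (fun x => cosh_weight p q (cos x)) 0 (2 * PI)
  = cos_moment 2 q * cos_moment 0 p - cos_moment 0 q * cos_moment 2 p.
Proof.
  unfold cosh_weight.
  rewrite (RInt_ext _ (fun x => cos_moment 2 q * (cos x ^ 0 * cosh (0 + p * cos x))
                               - cos_moment 0 q * (cos x ^ 2 * cosh (0 + p * cos x))))
    by (intros; rewrite Rplus_0_l; R_eq; ring).
  rewrite RInt_minus_cont, !RInt_scal_cont by (unfold cosh; solve_continuous).
  rewrite !RInt_cos_pow_cosh by (apply Nat.even_spec; reflexivity).
  rewrite cosh_0; R_eq; ring.
Qed.

Section MomentRatio.

Variables p q : R.
Hypothesis p_lt_q : 0 <= p < q.

(* The symmetrisation of [(cos^2 y - cos^2 x) exp (p cos x + q cos y)] under [x <-> y] and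
   under [(x, y) -> (x + PI, y + PI)]: its integral over both variables is twice the
   difference of the two sides of [cos_moment_ratio_lt], and unlike the original integrand
   it is pointwise nonnegative. *)
Definition moment_kernel (u v : R) : R :=
  (v ^ 2 - u ^ 2) * (cosh (p * u + q * v) - cosh (q * u + p * v)).

(* [(p u + q v)^2 - (q u + p v)^2 = (q^2 - p^2) (v^2 - u^2)], so both factors of the
   kernel have the same sign. *)
Lemma moment_kernel_nonneg u v : 0 <= moment_kernel u v.
Proof.
  pose proof (cosh_sqr_monotone (q * u + p * v) (p * u + q * v)).
  assert (0 < q ^ 2 - p ^ 2) by nra.
  unfold moment_kernel; nra.
Qed.

Lemma moment_kernel_pos u v : u ^ 2 <> v ^ 2 -> 0 < moment_kernel u v.
Proof.
  intros Huv.
  assert (0 < q ^ 2 - p ^ 2) by nra.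
  assert (Hsq : (q * u + p * v) ^ 2 <> (p * u + q * v) ^ 2)
    by (intros Heq; apply Huv; apply (Rmult_eq_reg_l (q ^ 2 - p ^ 2)); nra).
  pose proof (cosh_sqr_monotone_strict _ _ Hsq).
  unfold moment_kernel; nra.
Qed.

Lemma RInt_moment_kernel u :
  RInt (fun y => moment_kernel u (cos y)) 0 (2 * PI) = cosh_weight p q u - cosh_weight q p u.
Proof.
  unfold moment_kernel, cosh_weight.
  rewrite (RInt_ext _ (fun y => (cos y ^ 2 - u ^ 2) * cosh (p * u + q * cos y)
                               - (cos y ^ 2 - u ^ 2) * cosh (q * u + p * cos y)))
    by (intros; R_eq; ring).
  rewrite RInt_minus_cont, !RInt_sqr_sub_cosh by (unfold cosh; solve_continuous).
  reflexivity.
Qed.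

Lemma cosh_weight_sub_ge0 u : 0 <= cosh_weight p q u - cosh_weight q p u.
Proof.
  rewrite <- RInt_moment_kernel.
  apply RInt_ge_0; [pose proof PI_RGT_0; lra | | intros; apply moment_kernel_nonneg].
  apply ex_RInt_cont; unfold moment_kernel, cosh; solve_continuous.
Qed.

Lemma cosh_weight_sub_gt0_at0 : 0 < cosh_weight p q 0 - cosh_weight q p 0.
Proof.
  rewrite <- RInt_moment_kernel; pose proof PI_RGT_0.
  apply (RInt_gt_0_at (fun y => moment_kernel 0 (cos y))) with (c := PI).
  - unfold moment_kernel, cosh; solve_continuous.
  - lra.
  - intros; apply moment_kernel_nonneg.
  - apply moment_kernel_pos; rewrite cos_PI; lra.
Qed.

Lemma cos_moment_ratio_lt : cos_moment 2 p * cos_moment 0 q < cos_moment 2 q * cos_moment 0 p.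
Proof.
  assert (H : 0 < RInt (fun x => cosh_weight p q (cos x) - cosh_weight q p (cos x)) 0 (2 * PI)).
  { pose proof PI_RGT_0.
    apply (RInt_gt_0_at (fun x => cosh_weight p q (cos x) - cosh_weight q p (cos x)))
      with (c := PI / 2).
    - unfold cosh_weight, cosh; solve_continuous.
    - lra.
    - intros; apply cosh_weight_sub_ge0.
    - rewrite cos_PI2; apply cosh_weight_sub_gt0_at0. }
  rewrite RInt_minus_cont, !RInt_cosh_weight in H by (unfold cosh_weight, cosh; solve_continuous).
  lra.
Qed.

End MomentRatio.

Lemma bessel_ratio_div_lt p q : 0 < p < q -> bessel_ratio q / q < bessel_ratio p / p.
Proof.
  intros Hpq. unfold bessel_ratio; rewrite !cos_moment1_by_parts.
  pose proof (cos_moment0_gt0 p); pose proof (cos_moment0_gt0 q).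
  assert (Hdiff : p * (cos_moment 0 p - cos_moment 2 p) / cos_moment 0 p / p
                  - q * (cos_moment 0 q - cos_moment 2 q) / cos_moment 0 q / q
                  = (cos_moment 2 q * cos_moment 0 p - cos_moment 2 p * cos_moment 0 q)
                    / (cos_moment 0 p * cos_moment 0 q)) by (field; lra).
  assert (0 < (cos_moment 2 q * cos_moment 0 p - cos_moment 2 p * cos_moment 0 q)
              / (cos_moment 0 p * cos_moment 0 q)).
  { apply Rdiv_lt_0_compat; [| nra].
    pose proof (cos_moment_ratio_lt p q ltac:(lra)); lra. }
  lra.
Qed.

Lemma bessel_ratio_div_inj p q : 0 < p -> 0 < q ->
  bessel_ratio p / p = bessel_ratio q / q -> p = q.
Proof.
  intros Hp Hq Heq.
  destruct (Rtotal_order p q) as [Hlt | [Hpq | Hgt]]; [| assumption |].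
  - pose proof (bessel_ratio_div_lt p q (conj Hp Hlt)); lra.
  - pose proof (bessel_ratio_div_lt q p (conj Hq Hgt)); lra.
Qed.

(** * The rotated von Mises weight *)

Lemma polar_angle A B : 0 < sqrt (A ^ 2 + B ^ 2) ->
  exists phi, A = sqrt (A ^ 2 + B ^ 2) * cos phi /\ B = sqrt (A ^ 2 + B ^ 2) * sin phi.
Proof.
  intros Hrho. set (rho := sqrt (A ^ 2 + B ^ 2)) in *.
  assert (Hrho2 : rho * rho = A ^ 2 + B ^ 2) by (apply sqrt_sqrt; nra).
  assert (Hc : -1 <= A / rho <= 1).
  { split; apply (Rmult_le_reg_r rho); auto;
      unfold Rdiv; rewrite Rmult_assoc, Rinv_l by lra; nra. }
  assert (Hs : sqrt (1 - (A / rho)²) = Rabs B / rho).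
  { replace (1 - (A / rho)²) with ((B / rho)²)
      by (unfold Rsqr; field_simplify; [f_equal; nra | lra | lra]).
    rewrite sqrt_Rsqr_abs, Rabs_div, (Rabs_right rho) by lra; reflexivity. }
  destruct (Rle_dec 0 B).
  - exists (acos (A / rho)).
    rewrite cos_acos, sin_acos, Hs, Rabs_right by lra; split; field; lra.
  - exists (- acos (A / rho)).
    rewrite cos_neg, sin_neg, cos_acos, sin_acos, Hs, Rabs_left by lra; split; field; lra.
Qed.

Definition vonMises_Z (A B : R) : R :=
  RInt (fun x => exp (A * cos x + B * sin x)) 0 (2 * PI).

Definition vonMises_cos (A B : R) : R :=
  RInt (fun x => cos x * exp (A * cos x + B * sin x)) 0 (2 * PI).

Definition vonMises_sin (A B : R) : R :=
  RInt (fun x => sin x * exp (A * cos x + B * sin x)) 0 (2 * PI).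

Definition mean_cos (A B : R) : R := vonMises_cos A B / vonMises_Z A B.

Definition mean_sin (A B : R) : R := vonMises_sin A B / vonMises_Z A B.

Section Polar.

Variables rho phi : R.

Lemma vonMises_exponent_polar x :
  rho * cos phi * cos x + rho * sin phi * sin x = rho * cos (x - phi).
Proof. rewrite cos_minus; ring. Qed.

Lemma RInt_cos_moment_phase k :
  RInt (fun x => cos (x - phi) ^ k * exp (rho * cos (x - phi))) 0 (2 * PI) = cos_moment k rho.
Proof.
  apply (RInt_periodic_shift (fun y => cos y ^ k * exp (rho * cos y)) ltac:(solve_continuous)
           (2 * PI) (- phi)).
  intros y; rewrite cos_add_2PI; reflexivity.
Qed.

Lemma RInt_sin_phase :
  RInt (fun x => sin (x - phi) * exp (rho * cos (x - phi))) 0 (2 * PI) = 0.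
Proof.
  transitivity (RInt (fun y => sin y * exp (rho * cos y)) 0 (2 * PI)).
  - apply (RInt_periodic_shift (fun y => sin y * exp (rho * cos y)) ltac:(solve_continuous)
             (2 * PI) (- phi)).
    intros y; rewrite cos_add_2PI, sin_add_2PI; reflexivity.
  - apply (RInt_sin_comp_cos (fun c => exp (rho * c))); solve_continuous.
Qed.

Lemma vonMises_Z_polar : vonMises_Z (rho * cos phi) (rho * sin phi) = cos_moment 0 rho.
Proof.
  rewrite <- RInt_cos_moment_phase; apply RInt_ext; intros x _.
  rewrite vonMises_exponent_polar, pow_O, Rmult_1_l; reflexivity.
Qed.

Lemma vonMises_cos_polar :
  vonMises_cos (rho * cos phi) (rho * sin phi) = cos phi * cos_moment 1 rho.
Proof.
  unfold vonMises_cos.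
  rewrite (RInt_ext _ (fun x => cos phi * (cos (x - phi) ^ 1 * exp (rho * cos (x - phi)))
                               - sin phi * (sin (x - phi) * exp (rho * cos (x - phi))))).
  - rewrite RInt_minus_cont, !RInt_scal_cont, RInt_cos_moment_phase, RInt_sin_phase
      by solve_continuous.
    R_eq; ring.
  - intros x _; rewrite vonMises_exponent_polar.
    replace (cos x) with (cos (x - phi + phi)) at 1 by (f_equal; ring).
    rewrite cos_plus; R_eq; ring.
Qed.

Lemma vonMises_sin_polar :
  vonMises_sin (rho * cos phi) (rho * sin phi) = sin phi * cos_moment 1 rho.
Proof.
  unfold vonMises_sin.
  rewrite (RInt_ext _ (fun x => sin phi * (cos (x - phi) ^ 1 * exp (rho * cos (x - phi)))
                               + cos phi * (sin (x - phi) * exp (rho * cos (x - phi))))).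
  - rewrite RInt_plus_cont, !RInt_scal_cont, RInt_cos_moment_phase, RInt_sin_phase
      by solve_continuous.
    R_eq; ring.
  - intros x _; rewrite vonMises_exponent_polar.
    replace (sin x) with (sin (x - phi + phi)) at 1 by (f_equal; ring).
    rewrite sin_plus; R_eq; ring.
Qed.

End Polar.

Lemma mean_rotate A B : 0 < sqrt (A ^ 2 + B ^ 2) ->
  mean_cos A B = A * (bessel_ratio (sqrt (A ^ 2 + B ^ 2)) / sqrt (A ^ 2 + B ^ 2)) /\
  mean_sin A B = B * (bessel_ratio (sqrt (A ^ 2 + B ^ 2)) / sqrt (A ^ 2 + B ^ 2)).
Proof.
  intros Hrho. destruct (polar_angle A B Hrho) as [phi [HA HB]].
  set (rho := sqrt (A ^ 2 + B ^ 2)) in *; clearbody rho; subst A B.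
  pose proof (cos_moment0_gt0 rho).
  unfold mean_cos, mean_sin, bessel_ratio.
  rewrite vonMises_Z_polar, vonMises_cos_polar, vonMises_sin_polar.
  split; field; lra.
Qed.

Lemma mean_cos_axis A : mean_cos A 0 = bessel_ratio A.
Proof.
  unfold mean_cos, vonMises_cos, vonMises_Z, bessel_ratio, cos_moment.
  f_equal; apply RInt_ext; intros x _; rewrite Rmult_0_l, Rplus_0_r; R_eq; ring.
Qed.

Lemma mean_sin_axis A : mean_sin A 0 = 0.
Proof.
  unfold mean_sin, vonMises_sin.
  rewrite (RInt_ext _ (fun x => sin x * exp (A * cos x)))
    by (intros; rewrite Rmult_0_l, Rplus_0_r; reflexivity).
  rewrite (RInt_sin_comp_cos (fun c => exp (A * c))) by solve_continuous.
  unfold Rdiv; ring.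
Qed.

(** * The self-consistency relation *)

Lemma weight_vonMises theta h r Psi x eta : weight theta h r Psi x eta =
  exp ((2 * theta * r * cos Psi + 2 * h * eta) * cos x + 2 * theta * r * sin Psi * sin x).
Proof. unfold weight; rewrite cos_minus; f_equal; ring. Qed.

Lemma RInt_q_cis theta h r Psi eta :
  @RInt C_R_CompleteNormedModule (fun x => (RtoC (q theta h r Psi x eta) * cis x)%C) 0 (2 * PI)
  = (mean_cos (2 * theta * r * cos Psi + 2 * h * eta) (2 * theta * r * sin Psi),
     mean_sin (2 * theta * r * cos Psi + 2 * h * eta) (2 * theta * r * sin Psi)).
Proof.
  set (A := 2 * theta * r * cos Psi + 2 * h * eta); set (B := 2 * theta * r * sin Psi).
  assert (HZ : Zpart theta h r Psi eta = vonMises_Z A B).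
  { apply RInt_ext; intros x _; apply weight_vonMises. }
  rewrite (RInt_pair _ (fun x => / vonMises_Z A B * (cos x * exp (A * cos x + B * sin x)))
                       (fun x => / vonMises_Z A B * (sin x * exp (A * cos x + B * sin x)))).
  - rewrite !RInt_scal_cont by solve_continuous.
    unfold mean_cos, mean_sin, Rdiv; f_equal; apply Rmult_comm.
  - solve_continuous.
  - solve_continuous.
  - intros x; unfold q, cis, RtoC, Cmult; rewrite HZ, weight_vonMises; simpl.
    f_equal; fold A B; ring.
Qed.

Lemma self_consistent_iff theta h r Psi : self_consistent theta h r Psi <->
  r * cos Psi = / 2 * (mean_cos (2 * theta * r * cos Psi - 2 * h) (2 * theta * r * sin Psi)
                       + mean_cos (2 * theta * r * cos Psi + 2 * h) (2 * theta * r * sin Psi)) /\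
  r * sin Psi = / 2 * (mean_sin (2 * theta * r * cos Psi - 2 * h) (2 * theta * r * sin Psi)
                       + mean_sin (2 * theta * r * cos Psi + 2 * h) (2 * theta * r * sin Psi)).
Proof.
  unfold self_consistent, mu_integral; rewrite !RInt_q_cis.
  replace (2 * theta * r * cos Psi + 2 * h * -1) with (2 * theta * r * cos Psi - 2 * h) by ring.
  replace (2 * theta * r * cos Psi + 2 * h * 1) with (2 * theta * r * cos Psi + 2 * h) by ring.
  unfold cis, RtoC, Cmult, Cplus, Cinv; simpl.
  split.
  - intros Heq; injection Heq; intros; split; lra.
  - intros [H1 H2]; f_equal; lra.
Qed.

Section Solutions.

Variables theta h r : R.
Hypothesis theta_gt0 : 0 < theta.
Hypothesis h_gt0 : 0 < h.
Hypothesis r_gt0 : 0 < r.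

Lemma self_consistent_real_axis Psi : Psi = 0 \/ Psi = PI ->
  self_consistent theta h r Psi <->
  r = / 2 * (bessel_ratio (2 * (h + theta * r)) - bessel_ratio (2 * (h - theta * r))).
Proof.
  intros HPsi. rewrite self_consistent_iff.
  assert (Hsin : sin Psi = 0) by (destruct HPsi as [-> | ->]; [apply sin_0 | apply sin_PI]).
  rewrite Hsin, Rmult_0_r, !mean_sin_axis, !mean_cos_axis.
  destruct HPsi as [-> | ->]; [rewrite cos_0 | rewrite cos_PI].
  - replace (2 * theta * r * 1 - 2 * h) with (- (2 * (h - theta * r))) by ring.
    replace (2 * theta * r * 1 + 2 * h) with (2 * (h + theta * r)) by ring.
    rewrite bessel_ratio_opp; split; [intros [H _] | intros H; split]; lra.
  - replace (2 * theta * r * -1 - 2 * h) with (- (2 * (h + theta * r))) by ring.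
    replace (2 * theta * r * -1 + 2 * h) with (2 * (h - theta * r)) by ring.
    rewrite bessel_ratio_opp; split; [intros [H _] | intros H; split]; lra.
Qed.

Lemma self_consistent_imag_axis Psi : Psi = PI / 2 \/ Psi = 3 * PI / 2 ->
  self_consistent theta h r Psi <->
  r = theta * r / sqrt (h ^ 2 + theta ^ 2 * r ^ 2)
      * bessel_ratio (2 * sqrt (h ^ 2 + theta ^ 2 * r ^ 2)).
Proof.
  intros HPsi. rewrite self_consistent_iff.
  replace (3 * PI / 2) with (3 * (PI / 2)) in HPsi by field.
  assert (Hcos : cos Psi = 0)
    by (destruct HPsi as [-> | ->]; [apply cos_PI2 | apply cos_3PI2]).
  assert (Hsin : sin Psi = 1 \/ sin Psi = -1)
    by (destruct HPsi as [-> | ->]; [left; apply sin_PI2 | right; apply sin_3PI2]).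
  set (S := sqrt (h ^ 2 + theta ^ 2 * r ^ 2)).
  assert (HS : 0 < S) by (apply sqrt_lt_R0; nra).
  assert (HS2 : S * S = h ^ 2 + theta ^ 2 * r ^ 2) by (apply sqrt_sqrt; nra).
  set (B := 2 * theta * r * sin Psi).
  assert (Hrho : forall A, A ^ 2 = 4 * h ^ 2 -> sqrt (A ^ 2 + B ^ 2) = 2 * S).
  { intros A HA; apply sqrt_lem_1; [nra | lra |].
    unfold B; destruct Hsin as [-> | ->]; nra. }
  rewrite Hcos, !Rmult_0_r, Rminus_0_l, Rplus_0_l.
  destruct (mean_rotate (- (2 * h)) B) as [Hcm Hsm];
    [rewrite Hrho by ring; lra | rewrite Hrho in Hcm, Hsm by ring].
  destruct (mean_rotate (2 * h) B) as [Hcp Hsp];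
    [rewrite Hrho by ring; lra | rewrite Hrho in Hcp, Hsp by ring].
  rewrite Hcm, Hsm, Hcp, Hsp.
  set (g := bessel_ratio (2 * S) / (2 * S)).
  replace (theta * r / S * bessel_ratio (2 * S)) with (2 * theta * r * g) by (unfold g; field; lra).
  clearbody g.
  assert (Hsin0 : sin Psi <> 0) by (destruct Hsin; lra).
  split.
  - intros [_ H]. apply (Rmult_eq_reg_r (sin Psi)); [| exact Hsin0].
    rewrite H; unfold B; field.
  - intros H; split; [ring |].
    rewrite H at 1; unfold B; field.
Qed.

Lemma self_consistent_on_axis Psi : self_consistent theta h r Psi -> sin Psi = 0 \/ cos Psi = 0.
Proof.
  rewrite self_consistent_iff; intros [Ecos Esin].
  destruct (Req_dec (sin Psi) 0) as [Hs | Hs]; [left; exact Hs | right].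
  set (B := 2 * theta * r * sin Psi) in *.
  set (Am := 2 * theta * r * cos Psi - 2 * h) in *.
  set (Ap := 2 * theta * r * cos Psi + 2 * h) in *.
  assert (HB : B <> 0) by (unfold B; apply Rmult_integral_contrapositive; split; [nra | exact Hs]).
  assert (Hrho_m : 0 < sqrt (Am ^ 2 + B ^ 2)) by (apply sqrt_lt_R0; nra).
  assert (Hrho_p : 0 < sqrt (Ap ^ 2 + B ^ 2)) by (apply sqrt_lt_R0; nra).
  destruct (mean_rotate Am B Hrho_m) as [Hcm Hsm].
  destruct (mean_rotate Ap B Hrho_p) as [Hcp Hsp].
  rewrite Hcm, Hcp in Ecos; rewrite Hsm, Hsp in Esin.
  set (gm := bessel_ratio (sqrt (Am ^ 2 + B ^ 2)) / sqrt (Am ^ 2 + B ^ 2)) in *.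
  set (gp := bessel_ratio (sqrt (Ap ^ 2 + B ^ 2)) / sqrt (Ap ^ 2 + B ^ 2)) in *.
  assert (Hsum : theta * (gm + gp) = 1).
  { apply (Rmult_eq_reg_l (r * sin Psi)); [| apply Rmult_integral_contrapositive; lra].
    rewrite Esin at 2; unfold B; field. }
  assert (Hg : gp = gm).
  { assert (Hcos : r * cos Psi = r * cos Psi * (theta * (gm + gp)) + h * (gp - gm))
      by (rewrite Ecos at 1; unfold Am, Ap; field).
    rewrite Hsum in Hcos; nra. }
  assert (Hsq : Ap ^ 2 + B ^ 2 = Am ^ 2 + B ^ 2).
  { rewrite <- (sqrt_sqrt (Ap ^ 2 + B ^ 2)), <- (sqrt_sqrt (Am ^ 2 + B ^ 2)) by nra.
    f_equal; apply bessel_ratio_div_inj; assumption. }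
  assert (Hdiff : Ap ^ 2 - Am ^ 2 = 16 * theta * r * h * cos Psi) by (unfold Ap, Am; ring).
  assert (0 < 16 * theta * r * h) by (repeat apply Rmult_lt_0_compat; lra).
  nra.
Qed.

End Solutions.

Theorem proposition3 (theta h : R) (Htheta : 0 < theta) (Hh : 0 < h)
  (r Psi : R) (Hr : 0 < r) (HPsi : 0 <= Psi < 2 * PI) :
  self_consistent theta h r Psi <->
  (((Psi = 0 \/ Psi = PI) /\
     r = / 2 * (BesselI 1 (2 * (h + theta * r)) / BesselI 0 (2 * (h + theta * r))
               - BesselI 1 (2 * (h - theta * r)) / BesselI 0 (2 * (h - theta * r))))
   \/
   ((Psi = PI / 2 \/ Psi = 3 * PI / 2) /\
     r = theta * r / sqrt (h ^ 2 + theta ^ 2 * r ^ 2)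
         * (BesselI 1 (2 * sqrt (h ^ 2 + theta ^ 2 * r ^ 2))
            / BesselI 0 (2 * sqrt (h ^ 2 + theta ^ 2 * r ^ 2))))).
Proof.
  rewrite !BesselI_ratio.
  split.
  - intros Hsc. destruct (self_consistent_on_axis theta h r Htheta Hh Hr Psi Hsc) as [Hs | Hc].
    + assert (HPsi' : Psi = 0 \/ Psi = PI)
        by (destruct (sin_eq_O_2PI_0 Psi) as [| [|]]; auto; lra).
      left; split; [exact HPsi' |].
      apply (self_consistent_real_axis theta h r Psi HPsi'); exact Hsc.
    + assert (HPsi' : Psi = PI / 2 \/ Psi = 3 * PI / 2)
        by (destruct (cos_eq_0_2PI_0 Psi) as [| ]; lra).
      right; split; [exact HPsi' |].
      apply (self_consistent_imag_axis theta h r Hh Psi HPsi'); exact Hsc.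
  - intros [[HPsi' Hfix] | [HPsi' Hfix]].
    + apply (self_consistent_real_axis theta h r Psi HPsi'); exact Hfix.
    + apply (self_consistent_imag_axis theta h r Hh Psi HPsi'); exact Hfix.
Qed.
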